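(* Every threshold graph is edge simplicial and co-edge simplicial. Moreover, there exists a graph that is edge simplicial and co-edge simplicial but not threshold.
   Context: A graph is threshold if it has no induced subgraph isomorphic to $2K_2$, $C_4$ or $P_4$ (equivalently, its vertex set partitions into a stable set $I$ and a clique $K$ such that the vertices of $I$ can be ordered $u_1,\dots,u_k$ with $N(u_1)\subseteq\cdots\subseteq N(u_k)$). A clique $C$ is simplicial if $C=N[v]$ for some vertex $v$; a graph is edge simplicial if every edge lies in a simplicial clique, and co-edge simplicial if its complement is edge simplicial. *)

From mathcomp Require Import all_boot.
Set Implicit Arguments. Unset Strict Implicit. Unset Printing Implicit Defensive.

Definition simple_graph (T : finType) (e : rel T) : Prop :=
  irreflexive e /\ symmetric e.

Definition compl_graph (T : finType) (e : rel T) : rel T :=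
  fun x y => (x != y) && ~~ e x y.

Definition closed_nbhd (T : finType) (e : rel T) (v : T) : {set T} :=
  [set u | (u == v) || e v u].

Definition is_clique (T : finType) (e : rel T) (C : {set T}) : Prop :=
  forall x y, x \in C -> y \in C -> x != y -> e x y.

Definition simplicial_clique (T : finType) (e : rel T) (C : {set T}) : Prop :=
  is_clique e C /\ exists v, C = closed_nbhd e v.

Definition edge_simplicial (T : finType) (e : rel T) : Prop :=
  forall x y, e x y -> exists C : {set T}, simplicial_clique e C /\ x \in C /\ y \in C.

Definition co_edge_simplicial (T : finType) (e : rel T) : Prop :=
  edge_simplicial (compl_graph e).

Definition has_induced_2K2 (T : finType) (e : rel T) : Prop :=
  exists a b c d : T, uniq [:: a; b; c; d] /\
    e a b /\ e c d /\ ~~ e a c /\ ~~ e a d /\ ~~ e b c /\ ~~ e b d.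

Definition has_induced_C4 (T : finType) (e : rel T) : Prop :=
  exists a b c d : T, uniq [:: a; b; c; d] /\
    e a b /\ e b c /\ e c d /\ e d a /\ ~~ e a c /\ ~~ e b d.

Definition has_induced_P4 (T : finType) (e : rel T) : Prop :=
  exists a b c d : T, uniq [:: a; b; c; d] /\
    e a b /\ e b c /\ e c d /\ ~~ e a c /\ ~~ e b d /\ ~~ e a d.

Definition threshold (T : finType) (e : rel T) : Prop :=
  ~ has_induced_2K2 e /\ ~ has_induced_C4 e /\ ~ has_induced_P4 e.

From mathcomp Require Import all_boot.
Set Implicit Arguments. Unset Strict Implicit. Unset Printing Implicit Defensive.

(* In a threshold graph two vertices u, w never have "private" neighbours
   a ~ u, a !~ w and b ~ w, b !~ u: according to the edges uw and ab, the
   vertices u, a, b, w would induce a C4, a P4 or a 2K2.  Hence adjacent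
   vertices have nested closed neighbourhoods, and for an edge xy a vertex v
   with N[v] minimal among those containing x and y has N[v] a clique: any
   p in N[v] has x, y in N[p] and N[v] included in N[p].  Threshold graphs
   are closed under complementation (2K2 and C4 are exchanged, P4 is
   self-complementary), which gives co-edge simpliciality.  The bull, a
   triangle with two pendant edges, is edge and co-edge simplicial but
   contains a P4. *)

Lemma uniq4E (T : eqType) (a b c d : T) :
  uniq [:: a; b; c; d] = [&& a != b, a != c, a != d, b != c, b != d & c != d].
Proof. by rewrite /= !inE !negb_or !andbT -!andbA. Qed.

Lemma uniq4_reorder (T : eqType) (a b c d a' b' c' d' : T) :
  uniq [:: a; b; c; d] -> [:: a'; b'; c'; d'] =i [:: a; b; c; d] ->
  uniq [:: a'; b'; c'; d'].
Proof. by move=> abcd_uniq eq_abcd; rewrite (uniq_size_uniq abcd_uniq). Qed.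

(* Closes [uniq [:: a'; b'; c'; d'] /\ <edges and non-edges>] when a', b', c', d'
   reorder a duplicate-free quadruple and each (non-)edge is a hypothesis up to
   the symmetry [e_sym]. *)
Ltac induced4_from uniq_abcd e_sym :=
  split; [ by apply: uniq4_reorder uniq_abcd _ => z; rewrite !inE; do 4!case: eqP
         | by do !split; rewrite // e_sym ].

Lemma compl_graphE (T : finType) (e : rel T) x y :
  x != y -> compl_graph e x y = ~~ e x y.
Proof. by rewrite /compl_graph => ->. Qed.

Section NestedNeighbourhoods.
Variables (T : finType) (e : rel T).
Hypothesis e_sym : symmetric e.

Definition nested_closed_nbhds : Prop :=
  forall v w, e v w ->
    closed_nbhd e v \subset closed_nbhd e w \/ closed_nbhd e w \subset closed_nbhd e v.

Lemma closed_nbhdC v p : (p \in closed_nbhd e v) = (v \in closed_nbhd e p).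
Proof. by rewrite !inE eq_sym e_sym. Qed.

Lemma nested_edge_simplicial : nested_closed_nbhds -> edge_simplicial e.
Proof.
move=> nested x y exy.
pose S := [set v | (x \in closed_nbhd e v) && (y \in closed_nbhd e v)].
have xS : x \in S by rewrite !inE eqxx exy orbT.
have yS : y \in S by rewrite !inE eqxx e_sym exy orbT.
case: (arg_minnP (fun v => #|closed_nbhd e v|) xS) => v vS v_min.
have := vS : v \in S; rewrite inE => /andP[xv yv].
have sub_nbhd w : w \in S -> w \in closed_nbhd e v ->
    closed_nbhd e v \subset closed_nbhd e w.
  move=> wS; rewrite inE => /predU1P[-> // | evw].
  case: (nested _ _ evw) => // sub_wv.
  have /eqP-> : closed_nbhd e w == closed_nbhd e v.
    by rewrite eqEcard sub_wv (v_min w wS).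
  exact: subxx.
exists (closed_nbhd e v); split=> //; split; last by exists v.
move=> p q pv qv neq_pq.
have pS : p \in S.
  rewrite inE !(closed_nbhdC p).
  by rewrite (subsetP (sub_nbhd x xS xv)) ?(subsetP (sub_nbhd y yS yv)).
by have := subsetP (sub_nbhd p pS pv) q qv; rewrite inE eq_sym (negbTE neq_pq).
Qed.

End NestedNeighbourhoods.

Section ThresholdGraphs.
Variables (T : finType) (e : rel T).
Hypotheses (e_irr : irreflexive e) (e_sym : symmetric e) (e_thr : threshold e).

Lemma threshold_no_private_nbhrs u w a b :
  u != w -> e u a -> a != w -> ~~ e w a -> e w b -> b != u -> ~~ e u b -> False.
Proof.
move=> neq_uw eua neq_aw nwa ewb neq_bu nub.
have neq_ua : u != a by apply: contraTneq eua => ->; rewrite e_irr.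
have neq_wb : w != b by apply: contraTneq ewb => ->; rewrite e_irr.
have neq_ab : a != b by apply: contraNneq nwa => ->.
have uawb : uniq [:: u; a; w; b].
  by rewrite uniq4E neq_ua neq_uw (eq_sym u b) neq_bu neq_aw neq_ab neq_wb.
case: e_thr => no_2K2 [no_C4 no_P4].
have [euw|nuw] := boolP (e u w); have [eab|nab] := boolP (e a b);
  [ apply: no_C4; exists u, a, b, w | apply: no_P4; exists a, u, w, b
  | apply: no_P4; exists u, a, b, w | apply: no_2K2; exists u, a, w, b ];
  induced4_from uawb e_sym.
Qed.

Lemma threshold_nested_closed_nbhds : nested_closed_nbhds e.
Proof.
move=> v w evw.
have [|/subsetPn[p pv pw]] := boolP (closed_nbhd e v \subset closed_nbhd e w).
  by left.
right; apply/subsetP => q qw; apply/negPn/negP => qv.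
have neq_vw : v != w by apply: contraTneq evw => ->; rewrite e_irr.
move: pv pw qw qv; rewrite !inE !negb_or.
move=> /predU1P[->|evp]; first by rewrite e_sym evw andbF.
move=> /andP[neq_pw nwp] /predU1P[->|ewq]; first by rewrite evw andbF.
move=> /andP[neq_qv nvq].
exact: (threshold_no_private_nbhrs neq_vw evp neq_pw nwp ewq neq_qv nvq).
Qed.

End ThresholdGraphs.

Section Complement.
Variables (T : finType) (e : rel T).
Hypothesis e_sym : symmetric e.

Lemma compl_simple : simple_graph (compl_graph e).
Proof. by split=> [x | x y]; rewrite /compl_graph ?eqxx // eq_sym e_sym. Qed.

Lemma compl_threshold : threshold e -> threshold (compl_graph e).
Proof.
case=> no_2K2 [no_C4 no_P4]; split; [|split] => -[a [b [c [d [abcd]]]]];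
  move: (abcd); rewrite uniq4E => /and5P[ab ac ad bc /andP[bd cd]];
  have da : d != a by [rewrite eq_sym];
  rewrite !compl_graphE // !negbK;
  [ move=> [nab [ncd [eac [ead [ebc ebd]]]]]; apply: no_C4; exists a, c, b, d
  | move=> [nab [nbc [ncd [nda [eac ebd]]]]]; apply: no_2K2; exists a, c, b, d
  | move=> [nab [nbc [ncd [eac [ebd ead]]]]]; apply: no_P4; exists c, a, d, b ];
  induced4_from abcd e_sym.
Qed.

End Complement.

Lemma threshold_edge_simplicial (T : finType) (e : rel T) :
  simple_graph e -> threshold e -> edge_simplicial e.
Proof.
case=> e_irr e_sym e_thr.
exact: nested_edge_simplicial e_sym (threshold_nested_closed_nbhds e_irr e_sym e_thr).
Qed.

(* [closed_nbhd] is a locked finset, so for a concrete graph we check edge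
   simpliciality on an enumeration [s] of the vertices, with the membership
   [p \in N[v]] spelled out as [(p == v) || e v p]. *)
Definition edge_simplicialb (T : eqType) (e : rel T) (s : seq T) : bool :=
  let in_nbhd v p := (p == v) || e v p in
  all (fun x => all (fun y => e x y ==> has (fun v =>
    [&& all (fun p => all (fun q => [&& in_nbhd v p, in_nbhd v q & p != q] ==> e p q) s) s,
        in_nbhd v x & in_nbhd v y]) s) s) s.

Lemma edge_simplicialbP (T : finType) (e : rel T) (s : seq T) :
  (forall x, x \in s) -> edge_simplicialb e s -> edge_simplicial e.
Proof.
move=> s_full /allP es_b x y exy.
have /allP/(_ y (s_full y)) := es_b x (s_full x).
rewrite exy => /hasP[v _ /and3P[/allP nbhd_clique xv yv]].
exists (closed_nbhd e v); split; last by rewrite !inE.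
split; last by exists v.
move=> p q; rewrite !inE => pv qv neq_pq.
by have /allP/(_ q (s_full q)) := nbhd_clique p (s_full p); rewrite pv qv neq_pq.
Qed.

Definition bull_edge (i j : nat) : bool :=
  (i, j) \in [:: (0, 1); (0, 2); (1, 2); (0, 4); (1, 3)].

Definition bull : rel 'I_5 := fun x y => bull_edge x y || bull_edge y x.

(* [enum 'I_5] does not reduce under [vm_compute] (it goes through the opaque
   [idP]), hence an explicit list. *)
Definition bull_vertices : seq 'I_5 :=
  [:: @Ordinal 5 0 isT; @Ordinal 5 1 isT; @Ordinal 5 2 isT; @Ordinal 5 3 isT; @Ordinal 5 4 isT].

Lemma mem_bull_vertices x : x \in bull_vertices.
Proof. by case: x => [[|[|[|[|[|n]]]]] ?]. Qed.

Lemma bull_simple : simple_graph bull.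
Proof. by split=> [[[|[|[|[|[|n]]]]] ?] | x y]; rewrite /bull // orbC. Qed.

Lemma bull_edge_simplicial : edge_simplicial bull.
Proof. by apply: (edge_simplicialbP mem_bull_vertices); vm_compute. Qed.

Lemma bull_co_edge_simplicial : co_edge_simplicial bull.
Proof. by apply: (edge_simplicialbP mem_bull_vertices); vm_compute. Qed.

Lemma bull_has_induced_P4 : has_induced_P4 bull.
Proof.
by exists (@Ordinal 5 4 isT), (@Ordinal 5 0 isT), (@Ordinal 5 1 isT), (@Ordinal 5 3 isT).
Qed.

Theorem corollary33 :
  (forall (T : finType) (e : rel T), simple_graph e -> threshold e ->
      edge_simplicial e /\ co_edge_simplicial e) /\
  (exists (T : finType) (e : rel T), simple_graph e /\
      edge_simplicial e /\ co_edge_simplicial e /\ ~ threshold e).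
Proof.
split.
  move=> T e e_simple e_thr; have [_ e_sym] := e_simple.
  split; first exact: threshold_edge_simplicial.
  apply: threshold_edge_simplicial; [exact: compl_simple | exact: compl_threshold].
exists 'I_5, bull; split; [|split; [|split]].
- exact: bull_simple.
- exact: bull_edge_simplicial.
- exact: bull_co_edge_simplicial.
- by case=> _ [_ no_P4]; exact: no_P4 bull_has_induced_P4.
Qed.
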